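(* Let $R$ be a commutative associative ring with unit element, let $a,b\in R$, and let $m\ge 1$ be an integer. Let $T_{a,b}$ be the symmetric $2m\times 2m$ matrix over $R$ whose diagonal entries are $0$, whose entries in positions $(i,i+1)$ and $(i+1,i)$ ($1\le i\le 2m-1$) are equal to $a$, and all of whose other entries are equal to $b$. Then, with the convention $0^0=1$, $$\mathrm{Hf}(T_{a,b})=\sum_{k=0}^{m}(a-b)^{m-k}\,b^{k}\,\frac{(m+k)!}{k!\,(m-k)!\,2^{k}}.$$ (Here each coefficient $\frac{(m+k)!}{k!(m-k)!2^k}$ is a positive integer, acting on $R$ by repeated addition.)
   Context: For a symmetric matrix $A=(a_{ij})$ of order $n=2m$ over a commutative ring, the hafnian is $\mathrm{Hf}(A)=\sum a_{i_1i_2}a_{i_3i_4}\cdots a_{i_{n-1}i_n}$, where the sum runs over all partitions of $\{1,\dots,n\}$ into $m$ disjoint unordered pairs $\{i_1,i_2\},\dots,\{i_{n-1},i_n\}$ (each partition counted once, irrespective of the order of the pairs and of the elements within each pair). Diagonal entries do not enter the definition. The hafnian of the empty ($0\times 0$) matrix is $1$. *)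

From HB Require Import structures.
From mathcomp Require Import all_boot all_order all_algebra.
Set Implicit Arguments. Unset Strict Implicit. Unset Printing Implicit Defensive.
Import GRing.Theory.
Local Open Scope ring_scope.

Definition perfect_matching (n : nat) (P : {set {set 'I_n}}) : bool :=
  partition P [set: 'I_n] && [forall B in P, #|B| == 2%N].

(* Weight of a pair B = {i, j} with i < j : the entry A i j
   (the product below has exactly one factor when #|B| = 2). *)
Definition pair_weight (R : comPzRingType) (n : nat) (A : 'M[R]_n)
  (B : {set 'I_n}) : R :=
  \prod_(i in B) \prod_(j in B | (i < j)%N) A i j.

(* Diagonal entries never
   occur. For n = 0 the only matching is the empty one, giving 1. *)
Definition hafnian (R : comPzRingType) (n : nat) (A : 'M[R]_n) : R :=
  \sum_(P : {set {set 'I_n}} | perfect_matching P)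
     \prod_(B in P) pair_weight A B.

Definition Tab (R : comPzRingType) (n : nat) (a b : R) : 'M[R]_n :=
  \matrix_(i < n, j < n)
     if i == j then 0
     else if ((i.+1 == j) || (j.+1 == i))%N then a else b.

From HB Require Import structures.
From mathcomp Require Import all_boot all_order all_algebra.
From mathcomp Require Import ring zify.
Import GRing.Theory.
Local Open Scope ring_scope.
Set Implicit Arguments. Unset Strict Implicit. Unset Printing Implicit Defensive.

(* The hafnian of a symmetric matrix satisfies the expansion
   along one index x:  Hf(S) = sum_{y in S, y <> x} A(x,y) Hf(S \ {x,y}),
   where Hf(S) is the sum over the perfect pairings of an index set S.
   We apply it to the matrices Tpart n, which agree with T_{a,b} on the
   first n indices and are constantly b elsewhere.  Expanding along the
   index n gives, for E a set of indices above n, the three-term recursion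
       Hf_{n+1}([0,n] u E) = Hf_n([0,n) u {n} u E) + (a-b) Hf_{n-1}([0,n-1) u E),
   i.e. Hf_n([0,n) u E) = haf_rec n |E|; the base case n = 0 is the hafnian
   of a constant matrix, (t-1)!! b^{t/2} for even t, 0 for odd t.
   Solving the recursion (a Fibonacci-type recursion whose solution counts
   the s-matchings C(n-s,s) of a path) gives
       haf_rec n F = sum_s C(n-s,s) (a-b)^s Hf_const(n+F-2s),
   and for n = 2m, F = 0 the substitution s = m - k together with
   (2k)! = k! 2^k (2k-1)!! yields the stated coefficients. *)

Section PairingSums.
Variables (T : finType) (R : comPzRingType) (f : {set T} -> R).

Definition is_pairing (S : {set T}) (P : {set {set T}}) : bool :=
  partition P S && [forall B in P, #|B| == 2%N].

Definition pairing_sum (S : {set T}) : R :=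
  \sum_(P | is_pairing S P) \prod_(B in P) f B.

Lemma pairing_sum_set0 : pairing_sum set0 = 1.
Proof.
rewrite /pairing_sum (bigD1 set0) /=; last first.
  by rewrite /is_pairing partition_set0 eqxx /=; apply/forall_inP=> B; rewrite inE.
rewrite big_set0 big1 ?addr0 // => P /andP[/andP[]]; rewrite partition_set0.
by move=> -> _ /eqP.
Qed.

Lemma pairing_block (S : {set T}) P x : is_pairing S P -> x \in S ->
  exists2 y, y \in S :\ x & pblock P x = [set x; y].
Proof.
case/andP=> pP /forall_inP c2 xS.
have xc : x \in cover P by rewrite (cover_partition pP).
have Bp := pblock_mem xc.
have /cards2P[u [v [uv Be]]] := c2 _ Bp.
have Bsub := partitionS pP Bp.
have : x \in pblock P x by rewrite mem_pblock.
rewrite Be !inE => /orP[]/eqP xe.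
  exists v; last by rewrite xe.
  by rewrite !inE xe eq_sym uv /=; apply: (subsetP Bsub); rewrite Be !inE eqxx orbT.
exists u; last by rewrite xe setUC.
by rewrite !inE xe uv /=; apply: (subsetP Bsub); rewrite Be !inE eqxx.
Qed.

Lemma pairing_sum_by_partner (S : {set T}) x : x \in S ->
  pairing_sum S = \sum_(y in S :\ x)
    \sum_(P | is_pairing S P && (pblock P x == [set x; y])) \prod_(B in P) f B.
Proof.
move=> xS; under [RHS]eq_bigr do rewrite big_mkcondr.
rewrite exchange_big /=; apply: eq_bigr => P pP.
have [y yS Py] := pairing_block pP xS.
rewrite -big_mkcondr (bigD1 y) ?Py ?eqxx ?andbT //= [X in _ + X]big_pred0 ?addr0 // => z.
apply/andP=> -[/andP[zS /eqP/setP/(_ z)]]; rewrite !inE eqxx orbT.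
case/orP=> /eqP ze; last by rewrite ze eqxx.
by move: zS; rewrite ze !inE eqxx.
Qed.

(* Removing the block {x, y} is a bijection from the pairings of S containing
   it onto the pairings of S minus {x, y}. *)
Lemma pairings_with_block (S : {set T}) x y : x \in S -> y \in S :\ x ->
  \sum_(P | is_pairing S P && (pblock P x == [set x; y])) \prod_(B in P) f B =
  f [set x; y] * pairing_sum (S :\: [set x; y]).
Proof.
move=> xS yS; set B0 := [set x; y].
have xy : x != y by move: yS; rewrite !inE eq_sym => /andP[].
have xB0 : x \in B0 by rewrite !inE eqxx.
have B0S : B0 \subset S.
  by apply/subsetP=> z; rewrite !inE => /orP[]/eqP-> //; case/setD1P: yS.
rewrite /pairing_sum mulr_sumr.
rewrite (reindex_onto (fun P' => B0 |: P') (fun P => P :\ B0)) /=; last first.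
  move=> P /andP[pP /eqP Px].
  by rewrite setD1K // -Px pblock_mem // (cover_partition (proj1 (andP pP))).
apply: eq_big => P'.
  apply/idP/idP.
    case/andP=> /andP[/andP[pP c2] _] /eqP <-.
    rewrite /is_pairing partitionD1 //= ?setU11 //.
    by apply/forall_inP=> B /setD1P[_ BP]; exact: (forall_inP c2).
  case/andP=> pP c2.
  have xnc : x \notin cover P' by rewrite (cover_partition pP) in_setD xB0.
  have nB0 : B0 \notin P' by apply: contra xnc => h; apply/bigcupP; exists B0.
  have pU : partition (B0 |: P') S.
    rewrite -(setID S B0) (setIidPr B0S); apply: partitionU1 => //.
      by apply/set0Pn; exists x.
    by rewrite disjoints_subset setCD subsetUr.
  rewrite /is_pairing pU /= setU1K // eqxx andbT.
  rewrite (def_pblock (partition_trivIset pU) (setU11 _ _) xB0) eqxx andbT.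
  apply/forall_inP=> B /setU1P[->|BP]; first by rewrite cards2 xy.
  exact: (forall_inP c2).
move=> /andP[/andP[/andP[pP _] _] /eqP e].
by rewrite big_setU1 //= -e setD11.
Qed.

Lemma pairing_sum_expand (S : {set T}) x : x \in S ->
  pairing_sum S = \sum_(y in S :\ x) f [set x; y] * pairing_sum (S :\: [set x; y]).
Proof.
move=> xS; rewrite (pairing_sum_by_partner xS).
by apply: eq_bigr => y yS; exact: pairings_with_block.
Qed.

End PairingSums.

Lemma card_setD2 (T : finType) (E : {set T}) x y : x \in E -> y \in E :\ x ->
  #|E :\: [set x; y]| = (#|E| - 2)%N.
Proof.
move=> xE yE; have -> : E :\: [set x; y] = (E :\ x) :\ y.
  by apply/setP=> z; rewrite !inE negb_or; case: (z == x); case: (z == y).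
by rewrite (cardsD1 x E) xE (cardsD1 y (E :\ x)) yE add1n add1n subSS subSS subn0.
Qed.

Section PairWeight.
Variables (R : comPzRingType) (n : nat).

Lemma pair_weight2 (A : 'M[R]_n) x y : x != y ->
  pair_weight A [set x; y] = if (x < y)%N then A x y else A y x.
Proof.
move=> xy; rewrite /pair_weight big_setU1 ?inE //= big_set1.
rewrite !big_mkcondr !big_setU1 ?inE //= !big_set1 !ltnn.
case: ltngtP => h; rewrite ?mulr1 ?mul1r //.
by move/val_inj: h => h; rewrite h eqxx in xy.
Qed.

Lemma pair_weight_sym (A : 'M[R]_n) x y : x != y -> A x y = A y x ->
  pair_weight A [set x; y] = A x y.
Proof. by move=> xy sA; rewrite pair_weight2 //; case: ifP. Qed.

Lemma pairing_sum_local (A A' : 'M[R]_n) (S : {set 'I_n}) :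
  (forall i j, i \in S -> j \in S -> (i < j)%N -> A i j = A' i j) ->
  pairing_sum (pair_weight A) S = pairing_sum (pair_weight A') S.
Proof.
move=> eqA; apply: eq_bigr => P /andP[pP _]; apply: eq_bigr => B BP.
have /subsetP BS := partitionS pP BP.
by apply: eq_bigr => i iB; apply: eq_bigr => j /andP[jB ij]; apply: eqA; auto.
Qed.

End PairWeight.

(* Pascal's rule in the form satisfied by the numbers 'C(n - s, s) of
   s-matchings of a path with n vertices. *)
Lemma binS_sub n s : 'C(n.+1 - s, s.+1) = ('C(n - s, s.+1) + 'C(n - s, s))%N.
Proof.
have [sn|ns] := leqP s n; first by rewrite subSn.
have e1 : (n.+1 - s = 0)%N by apply/eqP; rewrite subn_eq0.
have e2 : (n - s = 0)%N by apply/eqP; rewrite subn_eq0 ltnW.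
by rewrite e1 e2 !bin0n; case: s ns {e1 e2}.
Qed.

Section PartialTridiagonal.
Variables (R : comPzRingType) (a b : R) (N : nat).

Definition Tpart (n : nat) : 'M[R]_N := \matrix_(i, j)
  if [&& (i < n)%N, (j < n)%N & (i.+1 == j) || (j.+1 == i)] then a else b.

Definition Hf (n : nat) (S : {set 'I_N}) : R :=
  pairing_sum (pair_weight (Tpart n)) S.

Definition init_seg (n : nat) : {set 'I_N} := [set i : 'I_N | (i < n)%N].

Lemma Tpart_sym n x y : Tpart n x y = Tpart n y x.
Proof. by rewrite !mxE andbCA orbC. Qed.

Lemma Hf_expand n (S : {set 'I_N}) x : x \in S ->
  Hf n S = \sum_(y in S :\ x) Tpart n x y * Hf n (S :\: [set x; y]).
Proof.
move=> xS; rewrite /Hf (pairing_sum_expand _ xS); apply: eq_bigr => y yS.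
have xy : x != y by move: yS; rewrite !inE eq_sym => /andP[].
by rewrite (pair_weight_sym xy (Tpart_sym n x y)).
Qed.

Lemma Hf_local n n' (S : {set 'I_N}) :
  {in S, forall i : 'I_N, (i < n)%N = (i < n')%N} -> Hf n S = Hf n' S.
Proof.
by move=> eqn; apply: pairing_sum_local => i j iS jS _; rewrite !mxE (eqn i) // (eqn j).
Qed.

(* The hafnian of the constant matrix b of order t: b^(t/2) (t-1)!! for even t,
   0 for odd t, through its recursion; kept folded by simplification. *)
Fixpoint const_hafnian (t : nat) : R :=
  match t with 0 => 1 | 1 => 0 | t'.+2 => (b * const_hafnian t') *+ t'.+1 end.
Arguments const_hafnian t : simpl nomatch.

(* Tpart 0 is constantly b off the diagonal. *)
Lemma Hf0_const (E : {set 'I_N}) : Hf 0 E = const_hafnian #|E|.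
Proof.
suff gen t : forall E : {set 'I_N}, #|E| = t -> Hf 0 E = const_hafnian t by exact: gen.
elim/ltn_ind: t => -[|t] IH {}E cardE.
  by move/eqP: cardE; rewrite cards_eq0 => /eqP->; rewrite /Hf pairing_sum_set0.
have /set0Pn[x xE] : E != set0 by rewrite -cards_eq0 cardE.
have cardEx : #|E :\ x| = t by move: cardE; rewrite (cardsD1 x E) xE add1n => -[].
rewrite (Hf_expand _ xE) (eq_bigr (fun _ => b * const_hafnian t.-1)).
  by rewrite sumr_const cardEx; case: t {IH cardE cardEx}.
move=> y yE; rewrite mxE /= (IH t.-1) //; first by rewrite ltnS leq_pred.
by rewrite (card_setD2 xE yE) cardE subSS subn1.
Qed.

Lemma Tpart_outside n (x y : 'I_N) : ~~ (x < n)%N -> Tpart n x y = b.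
Proof. by move=> xn; rewrite mxE (negbTE xn). Qed.

Lemma Tpart_last k (x y : 'I_N) : val x = k -> y != x ->
  Tpart k.+1 x y = if (y.+1 == k)%N then a else b.
Proof.
move=> xk yx; have yk : val y != k by rewrite -xk val_eqE.
rewrite mxE xk ltnSn /=; congr (if _ then _ else _).
by apply/idP/idP; move: yk => /eqP yk; lia.
Qed.

(* Adding the index k to the tridiagonal part only adds the contribution of
   the pair {k, k - 1}, with weight a - b instead of b. *)
Lemma Hf_succ k (S : {set 'I_N}) (x : 'I_N) : val x = k -> x \in S ->
  Hf k.+1 S = Hf k S +
    (a - b) * \sum_(y in S :\ x | (y.+1 == k)%N) Hf k (S :\: [set x; y]).
Proof.
move=> xk xS.
rewrite (Hf_expand _ xS) [Hf k S](Hf_expand _ xS) big_mkcondr mulr_sumr -big_split /=.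
apply: eq_bigr => y yS; have yx : y != x by case/setD1P: yS.
have -> : Hf k.+1 (S :\: [set x; y]) = Hf k (S :\: [set x; y]).
  apply: Hf_local => i; rewrite !inE negb_or => /andP[/andP[ix _] _].
  by rewrite ltnS leq_eqVlt -xk val_eqE (negbTE ix).
rewrite Tpart_last // Tpart_outside ?xk ?ltnn //.
by case: eqP => _; [rewrite mulrBl addrC subrK | rewrite mulr0 addr0].
Qed.

Lemma init_segS k (x : 'I_N) : val x = k -> init_seg k.+1 = x |: init_seg k.
Proof.
by move=> xk; apply/setP=> i; rewrite !inE ltnS leq_eqVlt -xk val_eqE.
Qed.

(* The three-term recursion for Hf n (init_seg n :|: E), E lying above n;
   removing {k, k - 1} leaves init_seg (k - 1) :|: E. *)
Lemma Hf_init_seg_step k (E : {set 'I_N}) (x : 'I_N) : val x = k ->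
  {in E, forall e : 'I_N, (k < e)%N} ->
  Hf k.+1 (init_seg k.+1 :|: E) = Hf k (init_seg k :|: (x |: E)) +
    (a - b) * (if k is j.+1 then Hf j (init_seg j :|: E) else 0).
Proof.
move=> xk kE; rewrite (init_segS xk) -setUA [init_seg k :|: (_ |: _)]setUCA.
rewrite (Hf_succ xk (setU11 _ _)); congr (_ + _ * _).
case: k xk kE => [|j] xk kE; first by rewrite big_pred0 // => y; rewrite andbF.
have jN : (j < N)%N by apply: ltn_trans (ltn_ord x); rewrite xk.
pose y := Ordinal jN.
rewrite (big_pred1 y) => [|z]; last first.
  rewrite !inE eqSS -[z == y]val_eqE /=.
  case: (boolP (z == j :> nat)) => [/eqP zj|_]; last by rewrite andbF.
  have zx : (z == x) = false by rewrite -val_eqE /= xk zj ltn_eqF.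
  by rewrite zx zj ltnSn orbT.
have -> : (x |: (init_seg j.+1 :|: E)) :\: [set x; y] = init_seg j :|: E.
  apply/setP=> i; rewrite !inE -!val_eqE /= xk.
  case: (boolP (i \in E)) => [/kE|_]; rewrite ?orbT ?orbF; first lia.
  by apply/idP/idP; lia.
apply: Hf_local => i; rewrite !inE => /orP[|/kE] ?; apply/idP/idP; lia.
Qed.

(* haf_rec n F is Hf n (init_seg n :|: E) for any E of size F above n. *)
Fixpoint haf_rec (n F : nat) : R :=
  match n with
  | 0 => const_hafnian F
  | 1 => const_hafnian F.+1
  | (k.+1 as n').+1 => haf_rec n' F.+1 + (a - b) * haf_rec k F
  end.

Lemma haf_recSS k F : haf_rec k.+2 F = haf_rec k.+1 F.+1 + (a - b) * haf_rec k F.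
Proof. by []. Qed.

Lemma Hf_init_seg n (E : {set 'I_N}) : (n <= N)%N ->
  {in E, forall e : 'I_N, (n <= e)%N} -> Hf n (init_seg n :|: E) = haf_rec n #|E|.
Proof.
elim/ltn_ind: n E => -[|k] IH E kN nE.
  have -> : init_seg 0 :|: E = E by apply/setP=> i; rewrite !inE ltn0.
  exact: Hf0_const.
pose x := Ordinal kN.
have xE : x \notin E by apply/negP=> /nE; rewrite ltnn.
have kE : {in x |: E, forall e : 'I_N, (k <= e)%N}.
  by move=> e /setU1P[->|/nE /ltnW].
rewrite (@Hf_init_seg_step k E x) // IH ?cardsU1 ?(negbTE xE) ?(ltnW kN) //.
rewrite add1n; clear kE xE x.
case: k IH kN nE => [|j] IH kN nE; first by rewrite mulr0 addr0.
by rewrite IH ?(ltnW (ltnW kN)) // => e /nE /ltnW /ltnW.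
Qed.

(* The contribution of the s-matchings of the path on the first n indices:
   there are 'C(n - s, s) of them, each with weight (a - b)^s, times the
   constant hafnian on the n + F - 2s remaining indices. *)
Definition path_term (n F s : nat) : R :=
  (const_hafnian (n + F - s.*2) * (a - b) ^+ s) *+ 'C(n - s, s).

Lemma path_term_small n F s : (n - s < s)%N -> path_term n F s = 0.
Proof. by move=> h; rewrite /path_term bin_small // mulr0n. Qed.

Lemma path_termS n F s :
  path_term n.+2 F s.+1 = path_term n.+1 F.+1 s.+1 + (a - b) * path_term n F s.
Proof.
rewrite /path_term subSS binS_sub mulrnDr addSnnS; congr (_ + _).
by rewrite doubleS !addSn addnS !subSS exprS mulrnAr mulrCA.
Qed.

Lemma haf_rec_closed n F : haf_rec n F = \sum_(s < n.+1) path_term n F s.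
Proof.
elim/ltn_ind: n F => -[|[|k]] IH F.
- by rewrite big_ord1 /path_term /= double0 !subn0 add0n expr0 mulr1 bin0.
- rewrite big_ord_recr big_ord1 /= (@path_term_small 1 F 1) // addr0.
  by rewrite /path_term /= double0 !subn0 add1n expr0 mulr1 bin0.
rewrite haf_recSS !IH // big_ord_recl [RHS]big_ord_recl -addrA.
congr (_ + _); first by rewrite /path_term /= !bin0 addnS addSn.
rewrite [RHS]big_ord_recr /= (@path_term_small k.+2 F k.+2) ?subnn // addr0.
rewrite mulr_sumr -big_split; apply: eq_bigr => i _; exact: esym (path_termS _ _ _).
Qed.

End PartialTridiagonal.

Definition odd_fact (j : nat) : nat := \prod_(i < j) (i.*2).+1.

Lemma fact_double k : ((k.*2)`! = k`! * 2 ^ k * odd_fact k)%N.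
Proof.
elim: k => [|k IH]; first by rewrite /odd_fact big_ord0.
rewrite doubleS !factS IH /odd_fact big_ord_recr /= expnS -!muln2; ring.
Qed.

Lemma central_coef m k : (k <= m)%N ->
  ((m + k)`! %/ (k`! * (m - k)`! * 2 ^ k) = 'C(m + k, m - k) * odd_fact k)%N.
Proof.
move=> km; rewrite -(bin_fact (_ : m - k <= m + k)%N); last by lia.
have -> : (m + k - (m - k) = k.*2)%N by lia.
rewrite fact_double (_ : ('C(m + k, m - k) * ((m - k)`! * (k`! * 2 ^ k * odd_fact k)))%N =
   ('C(m + k, m - k) * odd_fact k) * (k`! * (m - k)`! * 2 ^ k))%N; last by ring.
by rewrite mulnK // !muln_gt0 !fact_gt0 expn_gt0.
Qed.

Section Evaluation.
Variables (R : comPzRingType) (a b : R).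

Lemma const_hafnian_double j : const_hafnian b j.*2 = b ^+ j *+ odd_fact j.
Proof.
elim: j => [|j IH]; first by rewrite /odd_fact big_ord0.
by rewrite doubleS /= IH /odd_fact big_ord_recr /= mulrnAr -mulrnA exprS.
Qed.

Lemma path_term_even m k : (k <= m)%N ->
  path_term a b m.*2 0 (m - k) =
  ((a - b) ^+ (m - k) * b ^+ k) *+ ((m + k)`! %/ (k`! * (m - k)`! * 2 ^ k)).
Proof.
move=> km; rewrite /path_term (_ : (m.*2 + 0 - (m - k).*2 = k.*2)%N); last by lia.
rewrite (_ : (m.*2 - (m - k) = m + k)%N); last by lia.
by rewrite const_hafnian_double central_coef // mulrnAl -mulrnA mulrC mulnC.
Qed.

(* T_{a,b} of order n is Tpart n on the whole index set. *)
Lemma hafnian_Tab n : hafnian (Tab n a b) = haf_rec a b n 0.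
Proof.
have -> : hafnian (Tab n a b) = Hf a b n (init_seg n n :|: set0).
  have -> : init_seg n n :|: set0 = setT by apply/setP=> i; rewrite !inE ltn_ord.
  apply: pairing_sum_local => i j _ _ ij.
  by rewrite !mxE -val_eqE /= (ltn_eqF ij) !ltn_ord.
by rewrite Hf_init_seg ?cards0 // => e; rewrite inE.
Qed.

(* For n = 2m only the terms with s <= m survive; sum them in reverse order. *)
Lemma haf_rec_double m :
  haf_rec a b m.*2 0 = \sum_(k < m.+1) path_term a b m.*2 0 (m - k).
Proof.
rewrite haf_rec_closed.
have -> : \sum_(s < m.*2.+1) path_term a b m.*2 0 s =
          \sum_(s < m.+1) path_term a b m.*2 0 s.
  rewrite [RHS](big_ord_widen m.*2.+1 (path_term a b m.*2 0)); last by lia.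
  rewrite [LHS](bigID (fun s : 'I_ _ => (s < m.+1)%N)) /= [X in _ + X]big1 ?addr0 //.
  by move=> s ms; apply: path_term_small; lia.
by rewrite (reindex_inj rev_ord_inj); apply: eq_bigr => k _ /=; rewrite subSS.
Qed.

End Evaluation.

(* The theorem (it holds for m = 0 as well). *)
Theorem mainTheorem1 (R : comPzRingType) (a b : R) (m : nat) (hm : (1 <= m)%N) :
  hafnian (Tab (m.*2) a b) =
  \sum_(k < m.+1)
     ((a - b) ^+ (m - k) * b ^+ k)
       *+ ((m + k)`! %/ (k`! * (m - k)`! * 2 ^ k)).
Proof.
rewrite hafnian_Tab haf_rec_double; apply: eq_bigr => k _.
by apply: path_term_even; rewrite -ltnS.
Qed.
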